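(* For any two words $w_0,w_1\in\mathcal{M}_{n_x,n_y}$ (comparable or not) there are decompositions $w_0=w_0^0w_0^1\cdots w_0^{2k-1}$ and $w_1=w_1^0w_1^1\cdots w_1^{2k-1}$ (concatenations) such that for each $i$, $w_0^i$ and $w_1^i$ have the same numbers of $x$'s and of $y$'s, and $w_0^i\le w_1^i$ if $i$ is even while $w_1^i\le w_0^i$ if $i$ is odd. The words $w_0^0,w_1^0,w_0^{2k-1},w_1^{2k-1}$ may be empty, but all other $w_j^i$ are nonempty.
   Context: $\mathcal{M}_{n_x,n_y}$ is the set of words in letters $x,y$ with $n_x$ $x$'s and $n_y$ $y$'s. For words $u,v$ with the same numbers of each letter, $u\le v$ iff for each $i$ the position of the $i$-th $x$ (from the left) in $u$ is at most its position in $v$. *)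

From mathcomp Require Import all_boot.
Set Implicit Arguments. Unset Strict Implicit. Unset Printing Implicit Defensive.

(* Words in letters x,y are encoded as seq bool: true = x, false = y. *)
Definition word := seq bool.

Definition nx (w : word) : nat := count id w.
Definition ny (w : word) : nat := count negb w.

Definition inM (a b : nat) (w : word) : bool := (nx w == a) && (ny w == b).

Definition xpos (w : word) : seq nat :=
  [seq i <- iota 0 (size w) | nth false w i].

Definition wle (u v : word) : bool :=
  [&& nx u == nx v, ny u == ny v & all2 leq (xpos u) (xpos v)].

(* Compare two words through their prefix x-counts: u <= v as soon as every
   prefix of u contains at least as many x's as the prefix of v of the same
   length.  Cut both words at the lengths where these counts agree.  Between
   two consecutive cuts the counts differ, and since they grow by at most one
   per letter the same word stays ahead on the whole stretch, so each piece is
   comparable.  Merging adjacent pieces with the same orientation, inserting an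
   empty piece at the front when the first orientation is wrong and an empty
   piece at the end to make the number of pieces even gives the decomposition. *)
From mathcomp Require Import all_boot zify.
Set Implicit Arguments. Unset Strict Implicit. Unset Printing Implicit Defensive.

Lemma nx_cat u v : nx (u ++ v) = nx u + nx v.
Proof. exact: count_cat. Qed.

Lemma size_nx_ny w : size w = nx w + ny w.
Proof. by rewrite -(count_predC id w). Qed.

Lemma ny_nx w : ny w = size w - nx w.
Proof. by rewrite size_nx_ny addKn. Qed.

Lemma nx_drop w j : nx (drop j w) = nx w - nx (take j w).
Proof. by rewrite -{2}(cat_take_drop j w) nx_cat addKn. Qed.

Lemma nx_take_step w j : nx (take j w) <= nx (take j.+1 w) <= (nx (take j w)).+1.
Proof.
rewrite -addn1 takeD nx_cat.
have := count_size id (take 1 (drop j w)); rewrite size_take_min /nx; lia.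
Qed.

Lemma xpos_cons b w : xpos (b :: w) = (if b then [:: 0] else [::]) ++ map succn (xpos w).
Proof.
rewrite /xpos /= -[1]addn0 iotaDl filter_map.
by case: b => //=; congr (_ :: map _ _); apply: eq_map => i; rewrite add1n.
Qed.

Lemma size_xpos w : size (xpos w) = nx w.
Proof. by elim: w => [|[] w IH] //; rewrite xpos_cons size_cat size_map IH. Qed.

Lemma sorted_xpos w : sorted ltn (xpos w).
Proof. by apply: sorted_filter; [exact: ltn_trans | exact: iota_ltn_sorted]. Qed.

Lemma count_xpos w j : count (fun p => p < j) (xpos w) = nx (take j w).
Proof.
elim: w j => [|b w IH] [|j] //; rewrite xpos_cons count_cat count_map.
  by case: b => /=; rewrite (eq_count (a2 := pred0)) ?count_pred0.
by case: b; rewrite /nx /= -/(nx _) -IH.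
Qed.

Lemma sorted_count_nth s i j : sorted ltn s -> i < size s ->
  (i < count (fun p => p < j) s) = (nth 0 s i < j).
Proof.
elim: s i => [|x s IH] i //= s_sorted lt_i_s.
have x_min : {in s, forall y, x < y} by apply/allP/(order_path_min ltn_trans).
have [lt_xj|le_jx] := ltnP x j.
  by case: i lt_i_s => [|i] //= lt_i_s; rewrite add1n ltnS (IH _ (path_sorted s_sorted)).
have none_below : count (fun p => p < j) s = 0.
  by apply/eqP; rewrite -leqn0 leqNgt -has_count; apply/hasPn => y /x_min/ltnW;
    rewrite -leqNgt; apply: leq_trans.
rewrite none_below; case: i lt_i_s => [|i] /= lt_i_s; apply/esym/negbTE;
  by rewrite -leqNgt // (leq_trans le_jx) // ltnW // x_min // mem_nth.
Qed.

Lemma nth_xpos_ltn w i j : i < nx w -> (i < nx (take j w)) = (nth 0 (xpos w) i < j).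
Proof. by move=> lt_iw; rewrite -count_xpos sorted_count_nth ?sorted_xpos ?size_xpos. Qed.

Definition xleads (u v : word) := forall j, nx (take j v) <= nx (take j u).

Definition xle (u v : word) := [/\ size u = size v, nx u = nx v & xleads u v].

Lemma xle_wle u v : xle u v -> wle u v.
Proof.
case=> eq_size eq_nx lead; rewrite /wle eq_nx !ny_nx eq_size eq_nx !eqxx /=.
rewrite all2E !size_xpos eq_nx eqxx /=.
apply/(all_nthP (0, 0)) => i; rewrite size_zip !size_xpos eq_nx minnn => lt_i.
rewrite nth_zip ?size_xpos ?eq_nx //= -ltnS -nth_xpos_ltn ?eq_nx //.
by rewrite (leq_trans _ (lead _)) // nth_xpos_ltn.
Qed.

Lemma xle_nil : xle [::] [::].
Proof. by split => // -[]. Qed.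

Lemma xle_cat u1 v1 u2 v2 : xle u1 v1 -> xle u2 v2 -> xle (u1 ++ u2) (v1 ++ v2).
Proof.
case=> size1 nx1 lead1 [size2 nx2 lead2]; split.
- by rewrite !size_cat size1 size2.
- by rewrite !nx_cat nx1 nx2.
- move=> j; rewrite !take_cat size1; case: ifP => _; first exact: lead1.
  by rewrite !nx_cat nx1 leq_add2l.
Qed.

Definition oriented (b : bool) (p : word * word) :=
  if b then xle p.2 p.1 else xle p.1 p.2.

Lemma oriented_size_nx b p : oriented b p -> size p.1 = size p.2 /\ nx p.1 = nx p.2.
Proof. by case: b => -[]. Qed.

Lemma oriented_nil b : oriented b ([::], [::]).
Proof. by case: b; apply: xle_nil. Qed.

Lemma oriented_cat b p q : oriented b p -> oriented b q ->
  oriented b (p.1 ++ q.1, p.2 ++ q.2).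
Proof. by case: b; apply: xle_cat. Qed.

(* Prefix x-counts move by at most one per letter, so as long as they never
   meet again, the word that is ahead after one letter stays ahead. *)
Lemma xleads_until_meet u v m :
    (forall k, 0 < k < m -> nx (take k u) != nx (take k v)) ->
    nx (take 1 v) <= nx (take 1 u) ->
  xleads (take m u) (take m v).
Proof.
move=> apart le1 j; rewrite -!take_min.
elim: (minn j m) (geq_minr j m) => [|[|i] IH] le_im; rewrite ?take0 //.
have := apart i.+1; rewrite le_im /= => /(_ isT) /eqP ne_i.
have := IH (ltnW le_im); have := nx_take_step u i.+1; have := nx_take_step v i.+1.
lia.
Qed.

Lemma first_meet u v : size u = size v -> nx u = nx v -> 0 < size u ->
  exists j sg, 0 < j <= size u /\ oriented sg (take j u, take j v).
Proof.
move=> eq_size eq_nx u_gt0.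
pose meet j := (0 < j) && (nx (take j u) == nx (take j v)).
have meet_end : meet (size u) by rewrite /meet u_gt0 take_size eq_size take_size eq_nx /=.
case: (ex_minnP (ex_intro meet _ meet_end)) => m /andP[m_gt0 /eqP meet_m] m_min.
have apart k : 0 < k < m -> nx (take k u) != nx (take k v).
  case/andP=> k_gt0 lt_km; apply: contraTneq lt_km => meet_k.
  by rewrite -leqNgt m_min // /meet k_gt0 meet_k /=.
have apart' k : 0 < k < m -> nx (take k v) != nx (take k u).
  by move/apart; rewrite eq_sym.
have size_m : size (take m u) = size (take m v) by rewrite !size_take_min eq_size.
exists m; rewrite m_gt0 m_min //.
have [le1|lt1] := leqP (nx (take 1 v)) (nx (take 1 u)).
- by exists false; split=> //; split=> //; apply: xleads_until_meet.
- by exists true; split=> //; split=> //; apply: xleads_until_meet (ltnW lt1).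
Qed.

Notation empty2 := ([::], [::]) (only parsing).

(* Piece i is oriented by [b (+) odd i]; past the end [nth] returns the empty
   pair, which is oriented both ways, so the condition needs no bound on i. *)
Definition alt_decomp (b : bool) (u v : word) (ps : seq (word * word)) :=
  [/\ 0 < size ps, flatten (map fst ps) = u, flatten (map snd ps) = v,
      forall i, oriented (b (+) odd i) (nth empty2 ps i) &
      forall i, 0 < i < size ps -> (nth empty2 ps i).1 != [::]].

Lemma alt_decomp_nil b : alt_decomp b [::] [::] [:: empty2].
Proof. by split=> // -[|i] //=; rewrite ?nth_nil; apply: oriented_nil. Qed.

Lemma alt_decomp_merge b x y q ps u v :
    oriented b (x, y) -> alt_decomp b u v (q :: ps) ->
  alt_decomp b (x ++ u) (y ++ v) ((x ++ q.1, y ++ q.2) :: ps).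
Proof.
move=> or_xy [_ <- <- or_ps ne_ps]; split=> //=; rewrite ?catA //.
- case=> [|i] //; rewrite addbF; apply: oriented_cat or_xy _.
  by rewrite -[b]addbF; apply: or_ps 0.
- by case=> [|i] //; apply: ne_ps i.+1.
Qed.

Lemma alt_decomp_shift b u v q ps : alt_decomp b u v (q :: ps) -> q.1 != [::] ->
  alt_decomp (~~ b) u v (empty2 :: q :: ps).
Proof.
move=> [_ dec_u dec_v or_ps ne_ps] ne_q; split=> //.
- by case=> [|i] /=; [apply: oriented_nil | rewrite addNb -addbN negbK; apply: or_ps].
- by case=> [|[|i]] // lt_i; apply: ne_ps i.+1 lt_i.
Qed.

Lemma alt_decomposition b u v : size u = size v -> nx u = nx v ->
  exists ps, alt_decomp b u v ps.
Proof.
move=> eq_size; move sz_u: (size u) => n.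
elim/ltn_ind: n b u v sz_u eq_size => n IH b u v sz_u eq_size eq_nx.
have [n0|n_gt0] := posnP n.
  move: sz_u eq_size; rewrite n0 => /size0nil-> /esym/size0nil->.
  by exists [:: empty2]; apply: alt_decomp_nil.
have [j [sg [/andP[j_gt0 le_ju] or_j]]] :
    exists j sg, 0 < j <= size u /\ oriented sg (take j u, take j v).
  by apply: first_meet => //; rewrite sz_u.
have [/= size_j nx_j] := oriented_size_nx or_j.
have lt_rest : size (drop j u) < n by rewrite size_drop; lia.
have [[|q ps] [//= _ dec_u dec_v or_ps ne_ps]] :
    exists ps, alt_decomp sg (drop j u) (drop j v) ps.
  by apply: IH lt_rest _ _ _ erefl _ _; rewrite ?size_drop ?nx_drop ?eq_size ?eq_nx ?nx_j.
have dec_sg := alt_decomp_merge or_j (And5 (ltn0Sn _) dec_u dec_v or_ps ne_ps).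
rewrite !cat_take_drop in dec_sg.
have [<-|ne_b] := eqVneq sg b; first by exists ((take j u ++ q.1, take j v ++ q.2) :: ps).
exists (empty2 :: (take j u ++ q.1, take j v ++ q.2) :: ps).
have -> : b = ~~ sg by move: ne_b; rewrite eq_sym; case: b; case: (sg).
apply: alt_decomp_shift dec_sg _.
by rewrite /= -size_eq0 size_cat size_takel ?sz_u //; lia.
Qed.

Section PadEven.
Variables (T : Type) (x0 : T).

Definition pad_even (s : seq T) := s ++ nseq (odd (size s)) x0.

Lemma size_pad_even s : size (pad_even s) = size s + odd (size s).
Proof. by rewrite size_cat size_nseq. Qed.

Lemma odd_size_pad_even s : ~~ odd (size (pad_even s)).
Proof. by rewrite size_pad_even oddD oddb addbb. Qed.

Lemma nth_pad_even s i : nth x0 (pad_even s) i = nth x0 s i.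
Proof. by rewrite nth_cat nth_nseq if_same; case: ltnP => // /(nth_default x0)->. Qed.

Lemma flatten_map_pad_even (U : Type) (f : T -> seq U) s : f x0 = [::] ->
  flatten (map f (pad_even s)) = flatten (map f s).
Proof. by move=> f0; rewrite /pad_even map_cat flatten_cat; case: odd; rewrite /= ?f0 !cats0. Qed.

End PadEven.

Theorem mainTheorem10 (a b : nat) (w0 w1 : word) :
  inM a b w0 -> inM a b w1 ->
  exists (k : nat) (s0 s1 : seq word),
    0 < k /\ [/\ size s0 = k.*2, size s1 = k.*2,
        flatten s0 = w0, flatten s1 = w1 &
        forall i, i < k.*2 ->
          [/\ nx (nth [::] s0 i) = nx (nth [::] s1 i),
              ny (nth [::] s0 i) = ny (nth [::] s1 i),
              (if odd i then wle (nth [::] s1 i) (nth [::] s0 i)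
               else wle (nth [::] s0 i) (nth [::] s1 i)) &
              (0 < i < (k.*2).-1 ->
                 nth [::] s0 i != [::] /\ nth [::] s1 i != [::])]].
Proof.
move=> /andP[/eqP nx0 /eqP ny0] /andP[/eqP nx1 /eqP ny1].
have [ps [ps_gt0 dec0 dec1 or_ps ne_ps]] : exists ps, alt_decomp false w0 w1 ps.
  by apply: alt_decomposition; rewrite ?size_nx_ny nx0 ?ny0 nx1 ?ny1.
set qs := pad_even empty2 ps.
have half_qs : (size qs)./2.*2 = size qs by rewrite even_halfK ?odd_size_pad_even.
have size_qs : size qs = size ps + odd (size ps) := size_pad_even empty2 ps.
exists (size qs)./2, (map fst qs), (map snd qs); rewrite half_qs !size_map.
split; first by rewrite -double_gt0 half_qs size_qs; lia.
split; rewrite ?flatten_map_pad_even // => i lt_i.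
rewrite !(nth_map empty2) // nth_pad_even.
have [/= size_i nx_i] := oriented_size_nx (or_ps i).
split=> //.
- by rewrite !ny_nx size_i nx_i.
- by move: (or_ps i); case: odd => /xle_wle.
- move=> /andP[i_gt0 lt_i']; have ne_i := ne_ps i ltac:(lia).
  by rewrite -!size_eq0 -size_i size_eq0.
Qed.
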